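(* Let $G=\bigl((f_j)_{j=1}^n;(R^i)_{i=1}^k;(f^i_j)_{i\in[k],\,j\in R^i}\bigr)$ be a resource selection game with I.D.-dependent weighting. If all functions $f_j$ ($j\in[n]$) and $f^i_j$ ($i\in[k]$, $j\in R^i$) are continuous, then a strong Nash equilibrium exists in $G$.
   Context: For $n,k\in\mathbb{N}$, an $n$-resource/$k$-player-type resource selection game with I.D.-dependent weighting is a triple $\bigl((f_j)_{j=1}^n;(R^i)_{i=1}^k;(f^i_j)_{i\in[k],j\in R^i}\bigr)$ where each $f_j:[0,\infty)\to\mathbb{R}$ is nondecreasing, each $R^i$ is a nonempty subset of $[n]$, and each $f^i_j:[0,1]\to[0,\infty)$ is increasing. A consumption profile is a map $s:[k]\to[0,\infty)^{[n]}$ with $s_j(i)=0$ for $j\notin R^i$ and $\sum_j s_j(i)=1$ (the fraction of type-$i$ players using resource $j$). The weighted load of resource $j$ is $\mu^s_j=\sum_{i:\,j\in R^i}f^i_j(s_j(i))$ and its cost is $h^s_j=f_j(\mu^s_j)$. $s$ is a Nash equilibrium if for every $i\in[k]$, every $\ell$ with $s_\ell(i)>0$ and every $j\in R^i$, $h^s_\ell\le h^s_j$. For a Nash equilibrium $s$ and $i\in[k]$, let $h^i=h^s_\ell$ for any $\ell$ with $s_\ell(i)>0$. A Nash equilibrium $s$ is strong if there is no consumption profile $s'\ne s$ such that for every $i\in[k]$ and every $\ell$ with $s'_\ell(i)>s_\ell(i)$, $h^{s'}_\ell<h^i$. *)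

From Stdlib Require Import Reals Lra Lia.
Open Scope R_scope.

Fixpoint sumR (m : nat) (g : nat -> R) : R :=
  match m with
  | O => 0
  | S m' => sumR m' g + g m'
  end.

Definition cont_on (P : R -> Prop) (g : R -> R) : Prop :=
  forall x, P x -> forall eps, 0 < eps -> exists delta, 0 < delta /\
    forall y, P y -> Rabs (y - x) < delta -> Rabs (g y - g x) < eps.

Definition nonneg_half (x : R) : Prop := 0 <= x.
Definition unit_int (x : R) : Prop := 0 <= x <= 1.

(* A game: n resources (indices j < n), k player types (indices i < k),
   f j : cost function of resource j,
   Rs i j : whether j belongs to R^i,
   w i j : the weighting function f^i_j.
   A profile s : nat -> nat -> R with  s i j = s_j(i). *)

Definition is_profile (n k : nat) (Rs : nat -> nat -> bool)
  (s : nat -> nat -> R) : Prop :=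
  forall i, (i < k)%nat ->
    (forall j, (j < n)%nat -> 0 <= s i j) /\
    (forall j, (j < n)%nat -> Rs i j = false -> s i j = 0) /\
    sumR n (fun j => s i j) = 1.

Definition load (k : nat) (Rs : nat -> nat -> bool) (w : nat -> nat -> R -> R)
  (s : nat -> nat -> R) (j : nat) : R :=
  sumR k (fun i => if Rs i j then w i j (s i j) else 0).

Definition cost (k : nat) (f : nat -> R -> R) (Rs : nat -> nat -> bool)
  (w : nat -> nat -> R -> R) (s : nat -> nat -> R) (j : nat) : R :=
  f j (load k Rs w s j).

Definition is_NE (n k : nat) (f : nat -> R -> R) (Rs : nat -> nat -> bool)
  (w : nat -> nat -> R -> R) (s : nat -> nat -> R) : Prop :=
  is_profile n k Rs s /\
  forall i l j, (i < k)%nat -> (l < n)%nat -> (j < n)%nat ->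
    0 < s i l -> Rs i j = true -> cost k f Rs w s l <= cost k f Rs w s j.

Definition profile_neq (n k : nat) (s s' : nat -> nat -> R) : Prop :=
  exists i j, (i < k)%nat /\ (j < n)%nat /\ s' i j <> s i j.

(* strong NE: no deviation s' <> s such that every type i that increases its
   usage of a resource l gets there a cost strictly below h^i
   (h^i = cost of any resource m with s_m(i) > 0; these all coincide at a NE) *)
Definition is_strong_NE (n k : nat) (f : nat -> R -> R) (Rs : nat -> nat -> bool)
  (w : nat -> nat -> R -> R) (s : nat -> nat -> R) : Prop :=
  is_NE n k f Rs w s /\
  ~ exists s', is_profile n k Rs s' /\ profile_neq n k s s' /\
      forall i l m, (i < k)%nat -> (l < n)%nat -> (m < n)%nat ->
        s i l < s' i l -> 0 < s i m ->
        cost k f Rs w s' l < cost k f Rs w s m.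

(* A strong equilibrium is obtained as a limit of discrete profiles. On the grid of step
   1/(N+1) pick, among the finitely many profiles with grid entries, one whose vector of
   perturbed costs h_j + mu_j/(N+1) is minimal for the leximax order; the perturbation makes
   every cost strictly increasing in its load. Let s be a cluster point of these profiles. A
   coalitional deviation s' from s, in which each type adding mass to a resource pays less there
   than it paid before, can be rounded to a grid deviation from the N-th discrete profile in which
   resources receiving mass become cheaper than before (or than some resource l0 losing mass
   was), the other resources do not become more expensive, and l0 becomes strictly cheaper. Such
   a deviation is leximax-smaller, and continuity of the f_j and f^i_j makes the rounding work
   for N large. Nash stability is the same argument for one type moving a little mass. *)

From Stdlib Require Import Reals.
Open Scope R_scope.
From Stdlib Require Import Lra Lia ZArith List ClassicalEpsilon Classical.
From mathcomp Require all_boot all_order all_algebra all_classical all_reals all_analysis.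
From mathcomp Require Rstruct Rstruct_topology.

Lemma sumR_ext m g h : (forall j, (j < m)%nat -> g j = h j) -> sumR m g = sumR m h.
Proof.
  induction m as [|m IH]; intros E; simpl; [reflexivity|].
  rewrite IH by (intros j Hj; apply E; lia). rewrite E by lia. reflexivity.
Qed.

Lemma sumR_le m g h : (forall j, (j < m)%nat -> g j <= h j) -> sumR m g <= sumR m h.
Proof.
  induction m as [|m IH]; intros H; simpl; [lra|].
  assert (H1 := IH (fun j Hj => H j ltac:(lia))). assert (H2 := H m ltac:(lia)). lra.
Qed.

Lemma sumR_lt m g h j0 : (j0 < m)%nat -> (forall j, (j < m)%nat -> g j <= h j) ->
  g j0 < h j0 -> sumR m g < sumR m h.
Proof.
  induction m as [|m IH]; intros Hj0 H Hlt; simpl; [lia|].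
  destruct (Nat.eq_dec j0 m) as [->|Hne].
  - assert (H1 := sumR_le m g h (fun j Hj => H j ltac:(lia))). lra.
  - assert (H1 := IH ltac:(lia) (fun j Hj => H j ltac:(lia)) Hlt). assert (H2 := H m ltac:(lia)). lra.
Qed.

Lemma sumR_minus m g h : sumR m (fun j => g j - h j) = sumR m g - sumR m h.
Proof. induction m as [|m IH]; simpl; [lra|]. rewrite IH. lra. Qed.

Lemma sumR_zero m : sumR m (fun _ => 0) = 0.
Proof. induction m as [|m IH]; simpl; [reflexivity|]. rewrite IH. lra. Qed.

Lemma sumR_nonneg m g : (forall j, (j < m)%nat -> 0 <= g j) -> 0 <= sumR m g.
Proof.
  intros H. rewrite <- (sumR_zero m).
  apply sumR_le. exact H.
Qed.

Lemma sumR_abs_bound m g e : (forall j, (j < m)%nat -> Rabs (g j) <= e) ->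
  Rabs (sumR m g) <= INR m * e.
Proof.
  induction m as [|m IH]; intros H; cbn [sumR]; [rewrite Rabs_R0; simpl; lra|].
  rewrite S_INR. eapply Rle_trans; [apply Rabs_triang|].
  assert (H1 := IH (fun j Hj => H j ltac:(lia))). assert (H2 := H m ltac:(lia)). lra.
Qed.

Lemma sumR_drop m j0 g : (j0 < m)%nat ->
  sumR m g = g j0 + sumR m (fun j => if Nat.eq_dec j j0 then 0 else g j).
Proof.
  induction m as [|m IH]; intros Hj0; simpl; [lia|].
  destruct (Nat.eq_dec m j0) as [->|Hne].
  - rewrite (sumR_ext j0 (fun j => if Nat.eq_dec j j0 then 0 else g j) g); [lra|].
    intros j Hj. destruct (Nat.eq_dec j j0); [lia|reflexivity].
  - rewrite IH by lia. lra.
Qed.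

Lemma sumR_indicator m j0 x : (j0 < m)%nat -> sumR m (fun j => if Nat.eq_dec j j0 then x else 0) = x.
Proof.
  intros Hj0. rewrite (sumR_drop m j0 _ Hj0). destruct (Nat.eq_dec j0 j0); [|lia].
  rewrite (sumR_ext m _ (fun _ => 0)), sumR_zero; [lra|].
  intros j Hj. destruct (Nat.eq_dec j j0); reflexivity.
Qed.

Lemma entry_le_sumR m g j0 : (j0 < m)%nat -> (forall j, (j < m)%nat -> 0 <= g j) ->
  g j0 <= sumR m g.
Proof.
  intros Hj0 H. rewrite (sumR_drop m j0 g Hj0).
  enough (0 <= sumR m (fun j => if Nat.eq_dec j j0 then 0 else g j)) by lra.
  apply sumR_nonneg. intros j Hj. destruct (Nat.eq_dec j j0); [lra|auto].
Qed.

Lemma sumR_pos_entry m g : 0 < sumR m g -> exists j, (j < m)%nat /\ 0 < g j.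
Proof.
  intros H. apply NNPP. intros Hno.
  enough (sumR m g <= 0) by lra.
  rewrite <- (sumR_zero m).
  apply sumR_le. intros j Hj. apply Rnot_lt_le. intros Hpos. apply Hno. eauto.
Qed.

Lemma sumR_eq_dominated m g h : sumR m g = sumR m h ->
  (forall j, (j < m)%nat -> g j <= h j) -> forall j, (j < m)%nat -> g j = h j.
Proof.
  intros E H j Hj. destruct (Rle_lt_or_eq_dec _ _ (H j Hj)) as [Hlt|]; [|assumption].
  assert (sumR m g < sumR m h) by (apply sumR_lt with j; auto). lra.
Qed.

Fixpoint count_ge (m : nat) (c : nat -> R) (th : R) : nat :=
  match m with
  | O => O
  | S m' => (count_ge m' c th + if Rle_dec th (c m') then 1 else 0)%nat
  end.

(* The leximax order: the decreasingly sorted vector [c'] is lexicographically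
   smaller than that of [c]. *)
Definition leximax_lt (m : nat) (c' c : nat -> R) : Prop :=
  exists th, (count_ge m c' th < count_ge m c th)%nat /\
    forall th', th <= th' -> (count_ge m c' th' <= count_ge m c th')%nat.

Lemma count_ge_ext m c c' th : (forall j, (j < m)%nat -> c j = c' j) ->
  count_ge m c th = count_ge m c' th.
Proof.
  induction m as [|m IH]; intros E; simpl; [reflexivity|].
  rewrite IH by (intros j Hj; apply E; lia). rewrite E by lia. reflexivity.
Qed.

Lemma count_ge_le m c' c th : (forall j, (j < m)%nat -> th <= c' j -> th <= c j) ->
  (count_ge m c' th <= count_ge m c th)%nat.
Proof.
  induction m as [|m IH]; intros H; simpl; [lia|].
  assert (H1 := IH (fun j Hj => H j ltac:(lia))).
  destruct (Rle_dec th (c' m)) as [Hc'|]; destruct (Rle_dec th (c m)); try lia.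
  exfalso. auto.
Qed.

Lemma count_ge_lt m c' c th l : (l < m)%nat ->
  (forall j, (j < m)%nat -> th <= c' j -> th <= c j) ->
  c' l < th <= c l -> (count_ge m c' th < count_ge m c th)%nat.
Proof.
  induction m as [|m IH]; intros Hl H [Hc' Hc]; simpl; [lia|].
  destruct (Nat.eq_dec l m) as [->|Hne].
  - assert (H1 := count_ge_le m c' c th (fun j Hj => H j ltac:(lia))).
    destruct (Rle_dec th (c' m)); destruct (Rle_dec th (c m)); lra || lia.
  - assert (H1 := IH ltac:(lia) (fun j Hj => H j ltac:(lia)) (conj Hc' Hc)).
    destruct (Rle_dec th (c' m)) as [Hm|]; destruct (Rle_dec th (c m)); try lia.
    exfalso. auto.
Qed.

Lemma leximax_lt_irrefl m c : ~ leximax_lt m c c.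
Proof. intros [th [H _]]. lia. Qed.

Lemma leximax_lt_trans m a b c : leximax_lt m a b -> leximax_lt m b c -> leximax_lt m a c.
Proof.
  intros [t1 [H1 H1']] [t2 [H2 H2']].
  destruct (Rle_dec t2 t1).
  - exists t1. split; [specialize (H2' t1 r); lia|].
    intros th Hth. specialize (H1' th Hth). specialize (H2' th ltac:(lra)). lia.
  - exists t2. split; [specialize (H1' t2 ltac:(lra)); lia|].
    intros th Hth. specialize (H1' th ltac:(lra)). specialize (H2' th Hth). lia.
Qed.

Lemma leximax_lt_ext m a a' b b' : (forall j, (j < m)%nat -> a j = a' j) ->
  (forall j, (j < m)%nat -> b j = b' j) -> leximax_lt m a b -> leximax_lt m a' b'.
Proof.
  intros Ea Eb [th [H1 H2]]. exists th.
  rewrite <- (count_ge_ext m a a' th Ea), <- (count_ge_ext m b b' th Eb). split; [exact H1|].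
  intros th' Hth. rewrite <- (count_ge_ext m a a' th' Ea), <- (count_ge_ext m b b' th' Eb). auto.
Qed.

Lemma leximax_lt_intro m c' c l : (l < m)%nat -> c' l < c l ->
  (forall j, (j < m)%nat -> c' j <= c j \/ c' j < c l) -> leximax_lt m c' c.
Proof.
  intros Hl Hlt H. exists (c l). split.
  - apply count_ge_lt with l; [exact Hl| |lra].
    intros j Hj Hth. destruct (H j Hj); lra.
  - intros th Hth. apply count_ge_le. intros j Hj Hj'. destruct (H j Hj); lra.
Qed.

Lemma exists_minimal_in_list {A : Type} (lt : A -> A -> Prop)
  (lt_irrefl : forall x, ~ lt x x) (lt_trans : forall x y z, lt x y -> lt y z -> lt x z)
  (P : A -> Prop) (L : list A) :
  (exists x, In x L /\ P x) -> exists x, In x L /\ P x /\ forall y, In y L -> P y -> ~ lt y x.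
Proof.
  induction L as [|a L IH]; intros [x [Hx HP]]; [destruct Hx|].
  destruct (classic (exists x, In x L /\ P x)) as [Hex|Hno].
  - destruct (IH Hex) as [b [Hb [HPb Hmin]]].
    destruct (classic (P a /\ lt a b)) as [[HPa Hab]|Hnab].
    + exists a. repeat split; [now left|exact HPa|].
      intros y [->|Hy] HPy Hya; [exact (lt_irrefl y Hya)|].
      exact (Hmin y Hy HPy (lt_trans _ _ _ Hya Hab)).
    + exists b. repeat split; [now right|exact HPb|].
      intros y [->|Hy] HPy Hyb; [exact (Hnab (conj HPy Hyb))|exact (Hmin y Hy HPy Hyb)].
  - destruct Hx as [->|Hx]; [|exfalso; eauto].
    exists x. repeat split; [now left|exact HP|].
    intros y [->|Hy] HPy Hyx; [exact (lt_irrefl y Hyx)|eauto].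
Qed.

Lemma bounded_choice {A : Type} (a0 : A) (k : nat) (P : nat -> A -> Prop) :
  (forall i, (i < k)%nat -> exists x, P i x) -> exists g, forall i, (i < k)%nat -> P i (g i).
Proof.
  induction k as [|k IH]; intros H; [exists (fun _ => a0); intros; lia|].
  destruct IH as [g Hg]; [intros i Hi; apply H; lia|].
  destruct (H k ltac:(lia)) as [x Hx].
  exists (fun i => if Nat.eq_dec i k then x else g i). intros i Hi.
  destruct (Nat.eq_dec i k) as [->|]; [exact Hx|apply Hg; lia].
Qed.

Definition update2 (g : nat -> nat -> nat) (i j a : nat) : nat -> nat -> nat :=
  fun i' j' => if Nat.eq_dec i' i then if Nat.eq_dec j' j then a else g i' j' else g i' j'.

Fixpoint tables (D : nat) (ps : list (nat * nat)) : list (nat -> nat -> nat) :=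
  match ps with
  | nil => (fun _ _ => O) :: nil
  | (i, j) :: ps' => flat_map (fun g => map (update2 g i j) (seq 0 (S D))) (tables D ps')
  end.

Lemma tables_complete D ps (rel : nat -> nat -> nat -> Prop) :
  (forall i j, In (i, j) ps -> exists a, (a <= D)%nat /\ rel i j a) ->
  exists h, In h (tables D ps) /\ forall i j, In (i, j) ps -> rel i j (h i j).
Proof.
  induction ps as [|[i j] ps IH]; intros H.
  - exists (fun _ _ => O). split; [now left|]. intros i j [].
  - destruct IH as [h [Hin Hh]]; [intros i' j' Hp; apply H; now right|].
    destruct (H i j (or_introl eq_refl)) as [a [Ha Hrel]].
    exists (update2 h i j a). split.
    + apply in_flat_map. exists h. split; [exact Hin|].
      apply in_map, in_seq. lia.
    + intros i' j' [Heq|Hp]; unfold update2.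
      * injection Heq as <- <-.
        destruct (Nat.eq_dec i i); [|lia]. destruct (Nat.eq_dec j j); [exact Hrel|lia].
      * destruct (Nat.eq_dec i' i) as [->|]; [destruct (Nat.eq_dec j' j) as [->|]|]; auto.
Qed.

Definition on_grid (D : nat) (v : R) : Prop := exists z : Z, v * INR D = IZR z.

Lemma on_grid_1 D : on_grid D 1.
Proof. exists (Z.of_nat D). rewrite <- INR_IZR_INZ. ring. Qed.

Lemma on_grid_minus D u v : on_grid D u -> on_grid D v -> on_grid D (u - v).
Proof. intros [a Ha] [b Hb]. exists (a - b)%Z. rewrite minus_IZR, <- Ha, <- Hb. ring. Qed.

Lemma on_grid_sumR D m g : (forall j, (j < m)%nat -> on_grid D (g j)) -> on_grid D (sumR m g).
Proof.
  induction m as [|m IH]; intros H; simpl; [exists 0%Z; simpl; ring|].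
  destruct (IH (fun j Hj => H j ltac:(lia))) as [a Ha]. destruct (H m ltac:(lia)) as [b Hb].
  exists (a + b)%Z. rewrite plus_IZR, <- Ha, <- Hb. ring.
Qed.

Lemma on_grid_numerator D v : on_grid D v -> 0 <= v <= 1 ->
  exists a, (a <= D)%nat /\ v * INR D = INR a.
Proof.
  intros [z Hz] [H0 H1]. assert (HD := pos_INR D).
  assert (Hz0 : (0 <= z)%Z) by (apply le_IZR; rewrite <- Hz; apply Rmult_le_pos; lra).
  destruct (IZN z Hz0) as [a ->]. rewrite <- INR_IZR_INZ in Hz.
  exists a. split; [apply INR_le; rewrite <- Hz; nra|exact Hz].
Qed.

Definition grid_floor (D : nat) (x : R) : R := IZR (Int_part (x * INR D)) / INR D.

Lemma grid_floor_spec D x : (0 < D)%nat ->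
  on_grid D (grid_floor D x) /\ grid_floor D x <= x < grid_floor D x + 1 / INR D.
Proof.
  intros HD. assert (HD' : 0 < INR D) by (apply lt_0_INR; exact HD).
  destruct (base_Int_part (x * INR D)) as [H1 H2]. unfold grid_floor. split.
  - exists (Int_part (x * INR D)). field. lra.
  - unfold Rdiv. split.
    + apply Rmult_le_reg_r with (INR D); [exact HD'|].
      rewrite Rmult_assoc, Rinv_l by lra. lra.
    + apply Rmult_lt_reg_r with (INR D); [exact HD'|].
      rewrite Rmult_plus_distr_r, !Rmult_assoc, Rinv_l by lra. lra.
Qed.

Lemma grid_floor_nonneg D x : 0 <= x -> 0 <= grid_floor D x.
Proof.
  intros Hx. unfold grid_floor. destruct (base_Int_part (x * INR D)) as [_ H2].
  assert (0 <= x * INR D) by (apply Rmult_le_pos; [exact Hx|apply pos_INR]).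
  assert (Hz : (-1 < Int_part (x * INR D))%Z) by (apply lt_IZR; lra).
  apply Rmult_le_pos; [apply IZR_le; lia|].
  destruct D; [simpl; rewrite Rinv_0; lra|].
  left. apply Rinv_0_lt_compat, lt_0_INR. lia.
Qed.

Lemma common_radius (M : nat) (P : nat -> R -> Prop) :
  (forall p d d', P p d -> 0 < d' <= d -> P p d') ->
  (forall p, (p < M)%nat -> exists d, 0 < d /\ P p d) ->
  exists d, 0 < d /\ forall p, (p < M)%nat -> P p d.
Proof.
  intros Hmon. induction M as [|M IH]; intros H; [exists 1; split; [lra|intros; lia]|].
  destruct IH as [d1 [Hd1 H1]]; [intros p Hp; apply H; lia|].
  destruct (H M ltac:(lia)) as [d2 [Hd2 H2]].
  exists (Rmin d1 d2). split; [now apply Rmin_pos|].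
  intros p Hp. destruct (Nat.eq_dec p M) as [->|Hne].
  - apply (Hmon M d2); [exact H2|split; [now apply Rmin_pos|apply Rmin_r]].
  - apply (Hmon p d1); [apply H1; lia|split; [now apply Rmin_pos|apply Rmin_l]].
Qed.

Lemma sumR_continuous m (G : nat -> R -> R) (x : nat -> R) (Dom : R -> Prop) :
  (forall i, (i < m)%nat -> forall e, 0 < e -> exists d, 0 < d /\
     forall y, Dom y -> Rabs (y - x i) < d -> Rabs (G i y - G i (x i)) < e) ->
  forall e, 0 < e -> exists d, 0 < d /\ forall y : nat -> R, (forall i, (i < m)%nat -> Dom (y i)) ->
    (forall i, (i < m)%nat -> Rabs (y i - x i) < d) ->
    Rabs (sumR m (fun i => G i (y i)) - sumR m (fun i => G i (x i))) < e.
Proof.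
  intros HG e He. assert (Hm : 0 < INR m + 1) by (pose proof (pos_INR m); lra).
  destruct (common_radius m (fun i d => forall y, Dom y -> Rabs (y - x i) < d ->
      Rabs (G i y - G i (x i)) < e / (INR m + 1))) as [d [Hd Hall]].
  - intros i d d' H [Hd' Hle] y Hy Hyd. apply H; [exact Hy|lra].
  - intros i Hi. apply HG; [exact Hi|]. apply Rdiv_lt_0_compat; lra.
  - exists d. split; [exact Hd|]. intros y Hy Hyd. rewrite <- sumR_minus.
    eapply Rle_lt_trans; [apply sumR_abs_bound with (e := e / (INR m + 1))|].
    + intros i Hi. left. apply Hall; auto.
    + replace (INR m * (e / (INR m + 1))) with (e - e / (INR m + 1)) by (field; lra).
      assert (0 < e / (INR m + 1)) by (apply Rdiv_lt_0_compat; lra). lra.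
Qed.

Definition is_strategy (n : nat) (A : nat -> bool) (r : nat -> R) : Prop :=
  (forall j, (j < n)%nat -> 0 <= r j) /\
  (forall j, (j < n)%nat -> A j = false -> r j = 0) /\
  sumR n r = 1.

Lemma strategy_le_1 n A r j : is_strategy n A r -> (j < n)%nat -> r j <= 1.
Proof. intros [H0 [_ H1]] Hj. rewrite <- H1. now apply entry_le_sumR. Qed.

Lemma strategy_support n A r j : is_strategy n A r -> (j < n)%nat -> 0 < r j -> A j = true.
Proof.
  intros [_ [HA _]] Hj Hpos. destruct (A j) eqn:E; [reflexivity|].
  rewrite (HA j Hj E) in Hpos. lra.
Qed.

Lemma strategy_eq_of_le n A r r' : is_strategy n A r -> is_strategy n A r' ->
  (forall j, (j < n)%nat -> r' j <= r j) -> forall j, (j < n)%nat -> r' j = r j.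
Proof. intros [_ [_ H]] [_ [_ H']] Hle. apply sumR_eq_dominated; [congruence|exact Hle]. Qed.

Lemma strategy_increase n A r r' j : is_strategy n A r -> is_strategy n A r' ->
  (j < n)%nat -> r' j < r j -> exists l, (l < n)%nat /\ r l < r' l.
Proof.
  intros Hr Hr' Hj Hlt. apply NNPP. intros Hno.
  enough (r' j = r j) by lra.
  apply (strategy_eq_of_le n A r r' Hr Hr'); [|exact Hj].
  intros l Hl. apply Rnot_lt_le. intros H. apply Hno. eauto.
Qed.

Lemma common_margin M (P : nat -> Prop) (x y : nat -> R) (z : R) :
  (forall m, (m < M)%nat -> P m -> x m < y m \/ x m < z) ->
  exists e, 0 < e /\ forall m, (m < M)%nat -> P m -> x m + e < y m \/ x m + e < z.
Proof.
  intros H. apply common_radius.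
  - intros m d d' Hd [Hd' Hle] Hm. destruct (Hd Hm); [left|right]; lra.
  - intros m Hm. destruct (classic (P m)) as [Hp|Hnp].
    + destruct (H m Hm Hp) as [Hlt|Hlt].
      * exists ((y m - x m) / 2). split; [lra|]. intros _. left. lra.
      * exists ((z - x m) / 2). split; [lra|]. intros _. right. lra.
    + exists 1. split; [lra|]. intros Hp. contradiction.
Qed.

Section Costs.
Variables (n k : nat) (f : nat -> R -> R) (Rs : nat -> nat -> bool) (w : nat -> nat -> R -> R).
Hypothesis Hf_mono : forall j, (j < n)%nat -> forall x y, 0 <= x -> x <= y -> f j x <= f j y.
Hypothesis Hw_nonneg : forall i j, (i < k)%nat -> (j < n)%nat -> Rs i j = true ->
  forall x, 0 <= x <= 1 -> 0 <= w i j x.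
Hypothesis Hw_incr : forall i j, (i < k)%nat -> (j < n)%nat -> Rs i j = true ->
  forall x y, 0 <= x -> x < y -> y <= 1 -> w i j x < w i j y.
Hypothesis Hf_cont : forall j, (j < n)%nat -> cont_on nonneg_half (f j).
Hypothesis Hw_cont : forall i j, (i < k)%nat -> (j < n)%nat -> Rs i j = true ->
  cont_on unit_int (w i j).

Definition in_box (t : nat -> nat -> R) : Prop :=
  forall i j, (i < k)%nat -> (j < n)%nat -> 0 <= t i j <= 1.

Lemma profile_in_box t : is_profile n k Rs t -> in_box t.
Proof.
  intros Ht i j Hi Hj. split; [now apply (proj1 (Ht i Hi))|].
  exact (strategy_le_1 n (Rs i) (t i) j (Ht i Hi) Hj).
Qed.

Lemma load_ext t t' j : (forall i, (i < k)%nat -> t i j = t' i j) ->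
  load k Rs w t j = load k Rs w t' j.
Proof. intros E. unfold load. apply sumR_ext. intros i Hi. now rewrite E. Qed.

Lemma load_nonneg t j : in_box t -> (j < n)%nat -> 0 <= load k Rs w t j.
Proof.
  intros Ht Hj. apply sumR_nonneg. intros i Hi.
  destruct (Rs i j) eqn:E; [now apply Hw_nonneg, Ht|lra].
Qed.

Lemma w_mono i j x y : (i < k)%nat -> (j < n)%nat -> Rs i j = true ->
  0 <= x -> x <= y -> y <= 1 -> w i j x <= w i j y.
Proof.
  intros Hi Hj HR Hx Hxy Hy. destruct (Rle_lt_or_eq_dec _ _ Hxy) as [Hlt|<-]; [|lra].
  left. now apply Hw_incr.
Qed.

Lemma load_le t t' j : in_box t -> in_box t' -> (j < n)%nat ->
  (forall i, (i < k)%nat -> t i j <= t' i j) -> load k Rs w t j <= load k Rs w t' j.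
Proof.
  intros Ht Ht' Hj Hle. apply sumR_le. intros i Hi.
  destruct (Rs i j) eqn:E; [|lra].
  destruct (Ht i j Hi Hj), (Ht' i j Hi Hj). apply w_mono; auto.
Qed.

Lemma load_lt t t' j i0 : in_box t -> in_box t' -> (j < n)%nat -> (i0 < k)%nat -> Rs i0 j = true ->
  (forall i, (i < k)%nat -> t i j <= t' i j) -> t i0 j < t' i0 j ->
  load k Rs w t j < load k Rs w t' j.
Proof.
  intros Ht Ht' Hj Hi0 HR Hle Hlt. apply sumR_lt with i0; [exact Hi0| |].
  - intros i Hi. destruct (Rs i j) eqn:E; [|lra].
    destruct (Ht i j Hi Hj), (Ht' i j Hi Hj). apply w_mono; auto.
  - rewrite HR. destruct (Ht i0 j Hi0 Hj), (Ht' i0 j Hi0 Hj). apply Hw_incr; auto.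
Qed.

Lemma cost_le t t' j : in_box t -> in_box t' -> (j < n)%nat ->
  (forall i, (i < k)%nat -> t i j <= t' i j) -> cost k f Rs w t j <= cost k f Rs w t' j.
Proof. intros. apply Hf_mono, load_le; auto. now apply load_nonneg. Qed.

Definition load_cap : R := sumR n (load k Rs w (fun _ _ => 1)).

Lemma load_le_cap t j : in_box t -> (j < n)%nat -> load k Rs w t j <= load_cap.
Proof.
  intros Ht Hj. assert (Hone : in_box (fun _ _ => 1)) by (intros i j' _ _; lra).
  apply Rle_trans with (load k Rs w (fun _ _ => 1) j).
  - apply load_le; [exact Ht|exact Hone|exact Hj|].
    intros i Hi. exact (proj2 (Ht i j Hi Hj)).
  - apply entry_le_sumR; [exact Hj|]. intros; now apply load_nonneg.
Qed.

Lemma load_cap_nonneg : 0 <= load_cap.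
Proof.
  apply sumR_nonneg. intros j Hj. apply load_nonneg; [|exact Hj]. intros i j' _ _. lra.
Qed.

Lemma cost_continuous r j : in_box r -> (j < n)%nat -> forall e, 0 < e -> exists d, 0 < d /\
  forall t, in_box t -> (forall i, (i < k)%nat -> Rabs (t i j - r i j) < d) ->
  Rabs (cost k f Rs w t j - cost k f Rs w r j) < e.
Proof.
  intros Hr Hj e He.
  destruct (Hf_cont j Hj (load k Rs w r j) (load_nonneg r j Hr Hj) e He) as [dl [Hdl Hf]].
  destruct (sumR_continuous k (fun i y => if Rs i j then w i j y else 0) (fun i => r i j) unit_int)
    with (e := dl) as [d [Hd Hload]]; [|exact Hdl|].
  - intros i Hi e' He'. destruct (Rs i j) eqn:E.
    + exact (Hw_cont i j Hi Hj E (r i j) (Hr i j Hi Hj) e' He').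
    + exists 1. split; [lra|]. intros. rewrite Rminus_0_r, Rabs_R0. exact He'.
  - exists d. split; [exact Hd|]. intros t Ht Htd. apply Hf; [now apply load_nonneg|].
    apply (Hload (fun i => t i j)); [|exact Htd]. intros i Hi. now apply Ht.
Qed.

Lemma cost_continuous_uniform r : in_box r -> forall e, 0 < e -> exists d, 0 < d /\
  forall t, in_box t -> (forall i j, (i < k)%nat -> (j < n)%nat -> Rabs (t i j - r i j) < d) ->
  forall j, (j < n)%nat -> Rabs (cost k f Rs w t j - cost k f Rs w r j) < e.
Proof.
  intros Hr e He.
  destruct (common_radius n (fun j d => forall t, in_box t ->
      (forall i, (i < k)%nat -> Rabs (t i j - r i j) < d) ->
      Rabs (cost k f Rs w t j - cost k f Rs w r j) < e)) as [d [Hd H]].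
  - intros j d d' Hjd [Hd' Hle] t Ht Htd. apply Hjd; [exact Ht|].
    intros i Hi. specialize (Htd i Hi). lra.
  - intros j Hj. now apply cost_continuous.
  - exists d. split; [exact Hd|]. intros t Ht Htd j Hj. apply H; auto.
Qed.

(* The perturbation by the load makes the cost of a resource strictly increasing in its
   load, although [f j] is merely nondecreasing. *)
Definition pcost (D : nat) (t : nat -> nat -> R) (j : nat) : R :=
  cost k f Rs w t j + load k Rs w t j / INR D.

Lemma pcost_ext D t t' j : (forall i, (i < k)%nat -> t i j = t' i j) -> pcost D t j = pcost D t' j.
Proof. intros E. unfold pcost, cost. now rewrite (load_ext t t' j E). Qed.

Lemma pcost_le t t' j D : in_box t -> in_box t' -> (j < n)%nat ->
  (forall i, (i < k)%nat -> t i j <= t' i j) -> pcost D t j <= pcost D t' j.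
Proof.
  intros Ht Ht' Hj Hle. unfold pcost, Rdiv.
  assert (cost k f Rs w t j <= cost k f Rs w t' j) by now apply cost_le.
  assert (load k Rs w t j <= load k Rs w t' j) by now apply load_le.
  assert (0 <= / INR D) by (destruct D; [simpl; rewrite Rinv_0; lra|
    left; apply Rinv_0_lt_compat, lt_0_INR; lia]).
  nra.
Qed.

Lemma pcost_lt t t' j i0 D : (0 < D)%nat -> in_box t -> in_box t' -> (j < n)%nat -> (i0 < k)%nat ->
  Rs i0 j = true -> (forall i, (i < k)%nat -> t i j <= t' i j) -> t i0 j < t' i0 j ->
  pcost D t j < pcost D t' j.
Proof.
  intros HD Ht Ht' Hj Hi0 HR Hle Hlt. unfold pcost, Rdiv.
  assert (cost k f Rs w t j <= cost k f Rs w t' j) by now apply cost_le.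
  assert (load k Rs w t j < load k Rs w t' j) by now apply load_lt with i0.
  assert (0 < / INR D) by (apply Rinv_0_lt_compat, lt_0_INR; exact HD).
  nra.
Qed.

Lemma pcost_near t j D : (0 < D)%nat -> in_box t -> (j < n)%nat ->
  cost k f Rs w t j <= pcost D t j <= cost k f Rs w t j + load_cap / INR D.
Proof.
  intros HD Ht Hj. unfold pcost, Rdiv.
  assert (0 <= load k Rs w t j) by now apply load_nonneg.
  assert (load k Rs w t j <= load_cap) by now apply load_le_cap.
  assert (0 < / INR D) by (apply Rinv_0_lt_compat, lt_0_INR; exact HD).
  nra.
Qed.

Lemma pcost_near_cost D r t j e : (0 < D)%nat -> in_box t -> (j < n)%nat ->
  Rabs (cost k f Rs w t j - cost k f Rs w r j) < e -> load_cap / INR D < e ->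
  cost k f Rs w r j - e < pcost D t j < cost k f Rs w r j + 2 * e.
Proof.
  intros HD Ht Hj Hc Hcap. destruct (pcost_near t j D HD Ht Hj). apply Rabs_def2 in Hc. lra.
Qed.

Lemma leximax_lt_of_cheaper_columns D t t' l0 i0 : (0 < D)%nat -> in_box t -> in_box t' ->
  (l0 < n)%nat -> (i0 < k)%nat -> Rs i0 l0 = true -> t i0 l0 < t' i0 l0 ->
  (forall m, (m < n)%nat -> (exists i, (i < k)%nat /\ t' i m < t i m) ->
     pcost D t m < pcost D t' m \/ pcost D t m < pcost D t' l0) ->
  leximax_lt n (pcost D t) (pcost D t').
Proof.
  intros HD Ht Ht' Hl0 Hi0 HR Hlt Hcol.
  assert (Hcases : forall m, (m < n)%nat ->
      (exists i, (i < k)%nat /\ t' i m < t i m) \/ forall i, (i < k)%nat -> t i m <= t' i m).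
  { intros m Hm. destruct (classic (exists i, (i < k)%nat /\ t' i m < t i m)) as [|Hno]; [now left|].
    right. intros i Hi. apply Rnot_lt_le. intros Hlt'. apply Hno. eauto. }
  apply leximax_lt_intro with l0; [exact Hl0| |].
  - destruct (Hcases l0 Hl0) as [Hup|Hle].
    + destruct (Hcol l0 Hl0 Hup); assumption.
    + now apply pcost_lt with i0.
  - intros m Hm. destruct (Hcases m Hm) as [Hup|Hle].
    + destruct (Hcol m Hm Hup); [left; lra|right; assumption].
    + left. now apply pcost_le.
Qed.

End Costs.

Section GridProfiles.
Variables (n k : nat) (f : nat -> R -> R) (Rs : nat -> nat -> bool) (w : nat -> nat -> R -> R).

Definition grid_profile (D : nat) (t : nat -> nat -> R) : Prop :=
  is_profile n k Rs t /\ forall i j, (i < k)%nat -> (j < n)%nat -> on_grid D (t i j).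

Lemma grid_profile_ext D t t' : (forall i j, (i < k)%nat -> (j < n)%nat -> t i j = t' i j) ->
  grid_profile D t -> grid_profile D t'.
Proof.
  intros E [Ht Hg]. split.
  - intros i Hi. destruct (Ht i Hi) as [H0 [HA H1]]. repeat split.
    + intros j Hj. rewrite <- E; auto.
    + intros j Hj HR. rewrite <- E; auto.
    + rewrite <- H1. symmetry. apply sumR_ext. intros j Hj. now apply E.
  - intros i j Hi Hj. rewrite <- E; auto.
Qed.

Lemma grid_profile_exists D :
  (forall i, (i < k)%nat -> exists j, (j < n)%nat /\ Rs i j = true) ->
  exists t, grid_profile D t.
Proof.
  intros HR_ne. destruct (bounded_choice O k _ HR_ne) as [sel Hsel].
  exists (fun i j => if Nat.eq_dec j (sel i) then 1 else 0). split.
  - intros i Hi. destruct (Hsel i Hi) as [Hs HR]. repeat split.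
    + intros j Hj. destruct (Nat.eq_dec j (sel i)); lra.
    + intros j Hj HRj. destruct (Nat.eq_dec j (sel i)) as [->|]; congruence.
    + exact (sumR_indicator n (sel i) 1 Hs).
  - intros i j Hi Hj. destruct (Nat.eq_dec j (sel i)); [apply on_grid_1|].
    exists 0%Z. simpl. ring.
Qed.

Lemma grid_profiles_finite D : (0 < D)%nat -> exists L, forall t, grid_profile D t ->
  exists t', In t' L /\ forall i j, (i < k)%nat -> (j < n)%nat -> t' i j = t i j.
Proof.
  intros HD. assert (HD' : 0 < INR D) by (apply lt_0_INR; exact HD).
  set (ps := list_prod (seq 0 k) (seq 0 n)).
  assert (Hps : forall i j, In (i, j) ps <-> (i < k)%nat /\ (j < n)%nat)
    by (intros; unfold ps; rewrite in_prod_iff, !in_seq; lia).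
  exists (map (fun h i j => INR (h i j) / INR D) (tables D ps)).
  intros t [Ht Hg].
  destruct (tables_complete D ps (fun i j a => t i j * INR D = INR a)) as [h [Hh Hth]].
  - intros i j [Hi Hj]%Hps. apply on_grid_numerator; [now apply Hg|].
    now apply (profile_in_box n k Rs).
  - exists (fun i j => INR (h i j) / INR D). split; [exact (in_map _ _ _ Hh)|].
    intros i j Hi Hj. rewrite <- (Hth i j (proj2 (Hps i j) (conj Hi Hj))). field. lra.
Qed.

Lemma leximin_grid_profile D : (0 < D)%nat ->
  (forall i, (i < k)%nat -> exists j, (j < n)%nat /\ Rs i j = true) ->
  exists s, grid_profile D s /\
    forall t, grid_profile D t -> ~ leximax_lt n (pcost k f Rs w D t) (pcost k f Rs w D s).
Proof.
  intros HD HR_ne. destruct (grid_profiles_finite D HD) as [L HL].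
  assert (Hagree : forall t t', (forall i j, (i < k)%nat -> (j < n)%nat -> t' i j = t i j) ->
      forall j, (j < n)%nat -> pcost k f Rs w D t' j = pcost k f Rs w D t j)
    by (intros t t' E j Hj; apply pcost_ext; auto).
  destruct (exists_minimal_in_list
      (fun a b => leximax_lt n (pcost k f Rs w D a) (pcost k f Rs w D b))
      (fun a => leximax_lt_irrefl _ _) (fun a b c => leximax_lt_trans _ _ _ _)
      (grid_profile D) L) as [s [_ [Hs Hmin]]].
  - destruct (grid_profile_exists D HR_ne) as [t Ht]. destruct (HL t Ht) as [t' [Hin E]].
    exists t'. split; [exact Hin|]. apply (grid_profile_ext D t); [|exact Ht].
    intros; symmetry; auto.
  - exists s. split; [exact Hs|]. intros t Ht Hlt.
    destruct (HL t Ht) as [t' [Hin E]]. apply (Hmin t' Hin).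
    + apply (grid_profile_ext D t); [|exact Ht]. intros; symmetry; auto.
    + revert Hlt. apply leximax_lt_ext; [|reflexivity]. intros j Hj. symmetry. now apply Hagree.
Qed.

End GridProfiles.

Definition round_entry (D : nat) (x x' y : R) : R :=
  if Rlt_dec x x' then grid_floor D x' else Rmin y (grid_floor D x').

Lemma round_entry_spec D x x' y eps : (0 < D)%nat -> 1 / INR D <= eps ->
  0 <= x' -> 0 <= y -> on_grid D y -> Rabs (y - x) < eps ->
  let e := round_entry D x x' y in
  on_grid D e /\ 0 <= e <= x' /\ x' - e < eps /\ (y < e -> x < x') /\ (x' + eps <= x -> e < y).
Proof.
  intros HD Heps Hx' Hy Hgy Hyx e.
  destruct (grid_floor_spec D x' HD) as [Hgf [Hf1 Hf2]].
  assert (Hf0 := grid_floor_nonneg D x' Hx').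
  apply Rabs_def2 in Hyx.
  unfold e, round_entry. destruct (Rlt_dec x x') as [Hlt|Hge].
  - repeat split; auto; lra.
  - assert (Hmin := Rmin_l y (grid_floor D x')). assert (Hmin' := Rmin_r y (grid_floor D x')).
    repeat split.
    + unfold Rmin. destruct (Rle_dec y (grid_floor D x')); assumption.
    + unfold Rmin. destruct (Rle_dec y (grid_floor D x')); lra.
    + lra.
    + unfold Rmin. destruct (Rle_dec y (grid_floor D x')); lra.
    + intros Hlt. lra.
    + intros Hle. lra.
Qed.

Definition fill_at (m l0 : nat) (e : nat -> R) : nat -> R :=
  fun j => if Nat.eq_dec j l0 then 1 - sumR m (fun j' => if Nat.eq_dec j' l0 then 0 else e j')
           else e j.

Lemma fill_at_sum m l0 e : (l0 < m)%nat -> sumR m (fill_at m l0 e) = 1.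
Proof.
  intros Hl0. rewrite (sumR_drop m l0 _ Hl0). unfold fill_at at 1.
  destruct (Nat.eq_dec l0 l0); [|lia].
  enough (sumR m (fun j => if Nat.eq_dec j l0 then 0 else fill_at m l0 e j) =
    sumR m (fun j => if Nat.eq_dec j l0 then 0 else e j)) by lra.
  apply sumR_ext. intros j Hj. unfold fill_at. destruct (Nat.eq_dec j l0); reflexivity.
Qed.

Lemma fill_at_bounds m l0 e r eps : (l0 < m)%nat -> sumR m r = 1 ->
  (forall j, (j < m)%nat -> 0 <= r j - e j <= eps) ->
  r l0 <= fill_at m l0 e l0 <= r l0 + INR m * eps.
Proof.
  intros Hl0 Hr1 He. unfold fill_at. destruct (Nat.eq_dec l0 l0); [|lia].
  assert (E : 1 - sumR m (fun j => if Nat.eq_dec j l0 then 0 else e j) - r l0 =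
      sumR m (fun j => if Nat.eq_dec j l0 then 0 else r j - e j)).
  { transitivity (sumR m (fun j => if Nat.eq_dec j l0 then 0 else r j) -
      sumR m (fun j => if Nat.eq_dec j l0 then 0 else e j)).
    - rewrite <- Hr1, (sumR_drop m l0 r Hl0). ring.
    - rewrite <- sumR_minus. apply sumR_ext. intros j Hj. destruct (Nat.eq_dec j l0); ring. }
  assert (0 <= sumR m (fun j => if Nat.eq_dec j l0 then 0 else r j - e j) <= INR m * eps);
    [|lra].
  assert (Heps : 0 <= eps) by (destruct (He l0 Hl0); lra). split.
  - apply sumR_nonneg. intros j Hj. destruct (Nat.eq_dec j l0); [lra|apply He; exact Hj].
  - eapply Rle_trans; [apply RRle_abs|]. apply sumR_abs_bound. intros j Hj.
    destruct (Nat.eq_dec j l0); [rewrite Rabs_R0; exact Heps|].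
    destruct (He j Hj). rewrite Rabs_right by lra. lra.
Qed.

Section StrategyRounding.
Variables (n : nat) (A : nat -> bool) (D : nat) (r r' v : nat -> R) (eps : R).
Hypotheses (HD : (0 < D)%nat) (Heps : 1 / INR D <= eps).
Hypotheses (Hr : is_strategy n A r) (Hr' : is_strategy n A r') (Hv : is_strategy n A v).
Hypotheses (Hgv : forall j, (j < n)%nat -> on_grid D (v j))
  (Hvr : forall j, (j < n)%nat -> Rabs (v j - r j) < eps).

Definition rounding_spec (t : nat -> R) : Prop :=
  is_strategy n A t /\ (forall j, (j < n)%nat -> on_grid D (t j)) /\
  (forall j, (j < n)%nat -> Rabs (t j - r' j) <= INR n * eps) /\
  (forall j, (j < n)%nat -> v j < t j -> r j < r' j) /\
  (forall j, (j < n)%nat -> r' j + eps <= r j -> t j < v j).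

Lemma rounding_eps_pos : 0 < eps.
Proof.
  eapply Rlt_le_trans; [|exact Heps]. apply Rdiv_lt_0_compat; [lra|apply lt_0_INR; exact HD].
Qed.

Lemma eps_le_n_eps j : (j < n)%nat -> eps <= INR n * eps.
Proof.
  intros Hj. pose proof rounding_eps_pos. assert (1 <= INR n) by (apply (le_INR 1); lia). nra.
Qed.

Lemma rounding_without_increase : (forall j, (j < n)%nat -> r' j <= r j) -> rounding_spec v.
Proof.
  intros Hle. assert (E := strategy_eq_of_le n A r r' Hr Hr' Hle).
  split; [exact Hv|]. split; [exact Hgv|]. split; [|split].
  - intros j Hj. rewrite E by exact Hj.
    apply Rle_trans with eps; [left; now apply Hvr|exact (eps_le_n_eps j Hj)].
  - intros j Hj Hlt. lra.
  - intros j Hj Hle'. rewrite E in Hle' by exact Hj. pose proof rounding_eps_pos. lra.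
Qed.

Lemma rounding_with_increase l0 : (l0 < n)%nat -> r l0 < r' l0 ->
  rounding_spec (fill_at n l0 (fun j => round_entry D (r j) (r' j) (v j))).
Proof.
  intros Hl0 Hinc. destruct Hr as [Hr0 _]. destruct Hr' as [Hr'0 [HA' Hr'1]].
  destruct Hv as [Hv0 _].
  set (e := fun j => round_entry D (r j) (r' j) (v j)).
  assert (He : forall j, (j < n)%nat -> on_grid D (e j) /\ 0 <= e j <= r' j /\ r' j - e j < eps /\
      (v j < e j -> r j < r' j) /\ (r' j + eps <= r j -> e j < v j))
    by (intros j Hj; apply round_entry_spec; auto).
  assert (Hl0_bounds : r' l0 <= fill_at n l0 e l0 <= r' l0 + INR n * eps).
  { apply fill_at_bounds; [exact Hl0|exact Hr'1|]. intros j Hj.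
    destruct (He j Hj) as [_ [He0 [Hclose _]]]. lra. }
  unfold fill_at in Hl0_bounds. destruct (Nat.eq_dec l0 l0) as [_|]; [|lia].
  unfold rounding_spec, fill_at. fold e. repeat split.
  - intros j Hj. destruct (Nat.eq_dec j l0) as [->|]; [specialize (Hr'0 l0 Hl0); lra|apply He; exact Hj].
  - intros j Hj HAj. destruct (Nat.eq_dec j l0) as [->|].
    + assert (HA := strategy_support n A r' l0 Hr' Hl0 (Rle_lt_trans _ _ _ (Hr0 l0 Hl0) Hinc)).
      congruence.
    + destruct (He j Hj) as [_ [He0 _]]. rewrite (HA' j Hj HAj) in He0. lra.
  - exact (fill_at_sum n l0 e Hl0).
  - intros j Hj. destruct (Nat.eq_dec j l0); [|apply He; exact Hj].
    apply on_grid_minus; [apply on_grid_1|]. apply on_grid_sumR. intros j' Hj'.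
    destruct (Nat.eq_dec j' l0); [exists 0%Z; simpl; ring|apply He; exact Hj'].
  - intros j Hj. destruct (Nat.eq_dec j l0) as [->|].
    + rewrite Rabs_right by lra. lra.
    + destruct (He j Hj) as [_ [He0 [Hclose _]]]. rewrite Rabs_left1 by lra.
      pose proof (eps_le_n_eps j Hj). lra.
  - intros j Hj. destruct (Nat.eq_dec j l0) as [->|]; [intros; exact Hinc|apply He; exact Hj].
  - intros j Hj. destruct (Nat.eq_dec j l0) as [->|]; [|apply He; exact Hj].
    pose proof rounding_eps_pos. lra.
Qed.

Lemma strategy_rounding : exists t, rounding_spec t.
Proof.
  destruct (classic (exists l0, (l0 < n)%nat /\ r l0 < r' l0)) as [[l0 [Hl0 Hinc]]|Hno].
  - eexists. exact (rounding_with_increase l0 Hl0 Hinc).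
  - exists v. apply rounding_without_increase. intros j Hj.
    apply Rnot_lt_le. intros Hlt. apply Hno. eauto.
Qed.

End StrategyRounding.

Lemma profile_rounding n k Rs D (s s' u : nat -> nat -> R) eps : (0 < D)%nat -> 1 / INR D <= eps ->
  is_profile n k Rs s -> is_profile n k Rs s' -> grid_profile n k Rs D u ->
  (forall i j, (i < k)%nat -> (j < n)%nat -> Rabs (u i j - s i j) < eps) ->
  exists t, grid_profile n k Rs D t /\
    (forall i j, (i < k)%nat -> (j < n)%nat -> Rabs (t i j - s' i j) <= INR n * eps) /\
    (forall i j, (i < k)%nat -> (j < n)%nat -> u i j < t i j -> s i j < s' i j) /\
    (forall i j, (i < k)%nat -> (j < n)%nat -> s' i j + eps <= s i j -> t i j < u i j).
Proof.
  intros HD Heps Hs Hs' [Hu Hgu] Hus.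
  destruct (bounded_choice (fun _ => 0) k
    (fun i => rounding_spec n (Rs i) D (s i) (s' i) (u i) eps)) as [t Ht].
  - intros i Hi. exact (strategy_rounding n (Rs i) D (s i) (s' i) (u i) eps HD Heps (Hs i Hi)
      (Hs' i Hi) (Hu i Hi) (fun j Hj => Hgu i j Hi Hj) (fun j Hj => Hus i j Hi Hj)).
  - exists t. split; [split|split; [|split]].
    + intros i Hi. now apply Ht.
    + intros i j Hi Hj. now apply Ht.
    + intros i j Hi Hj. now apply Ht.
    + intros i j Hi Hj. now apply Ht.
    + intros i j Hi Hj. now apply Ht.
Qed.

Lemma inv_succ_small eps : 0 < eps -> exists N0, forall N, (N0 <= N)%nat -> 1 / INR (S N) < eps.
Proof.
  intros He. destruct (archimed_cor1 eps He) as [N0 [H1 H2]]. exists N0. intros N HN.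
  assert (INR N0 <= INR (S N)) by (apply le_INR; lia). assert (0 < INR N0) by (apply lt_0_INR; lia).
  unfold Rdiv. rewrite Rmult_1_l. eapply Rle_lt_trans; [|exact H1]. now apply Rinv_le_contravar.
Qed.

Lemma Rabs_lt_all_eq_0 x : (forall eps, 0 < eps -> Rabs x < eps) -> x = 0.
Proof.
  intros H. destruct (Req_dec x 0) as [|Hx]; [assumption|].
  specialize (H (Rabs x) (Rabs_pos_lt x Hx)). lra.
Qed.

Lemma small_radius (m : nat) a b c : 0 < a -> 0 < b -> 0 < c ->
  exists eps, 0 < eps /\ eps <= a /\ INR m * eps < b /\ eps <= c.
Proof.
  intros Ha Hb Hc. assert (Hm : 0 < INR m + 1) by (pose proof (pos_INR m); lra).
  assert (Hbm : 0 < b / (INR m + 1)) by (apply Rdiv_lt_0_compat; lra).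
  exists (Rmin a (Rmin (b / (INR m + 1)) c)). repeat split.
  - repeat apply Rmin_pos; assumption.
  - apply Rmin_l.
  - apply Rle_lt_trans with (INR m * (b / (INR m + 1))).
    + apply Rmult_le_compat_l; [apply pos_INR|]. eapply Rle_trans; [apply Rmin_r|apply Rmin_l].
    + replace (INR m * (b / (INR m + 1))) with (b - b / (INR m + 1)) by (field; lra). lra.
  - eapply Rle_trans; apply Rmin_r.
Qed.

Definition cluster_point (k n : nat) (u : nat -> nat -> nat -> R) (s : nat -> nat -> R) : Prop :=
  forall eps, 0 < eps -> forall N0, exists N, (N0 <= N)%nat /\
    forall i j, (i < k)%nat -> (j < n)%nat -> Rabs (u N i j - s i j) < eps.

Lemma cluster_point_profile n k Rs u s : (forall N, is_profile n k Rs (u N)) ->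
  cluster_point k n u s -> is_profile n k Rs s.
Proof.
  intros Hu Hs i Hi.
  assert (Hnear : forall eps, 0 < eps -> exists r, is_strategy n (Rs i) r /\
      forall j, (j < n)%nat -> Rabs (r j - s i j) < eps).
  { intros eps He. destruct (Hs eps He O) as [N [_ HN]]. exists (u N i). split; [exact (Hu N i Hi)|].
    intros j Hj. now apply HN. }
  repeat split.
  - intros j Hj. apply Rnot_lt_le. intros Hneg.
    destruct (Hnear (- s i j) ltac:(lra)) as [r [[Hr0 _] Hr]].
    specialize (Hr0 j Hj). specialize (Hr j Hj). apply Rabs_def2 in Hr. lra.
  - intros j Hj HR. apply Rabs_lt_all_eq_0. intros eps He.
    destruct (Hnear eps He) as [r [[_ [HA _]] Hr]].
    specialize (Hr j Hj). now rewrite (HA j Hj HR), Rminus_0_l, Rabs_Ropp in Hr.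
  - apply Rminus_diag_uniq, Rabs_lt_all_eq_0. intros eps He.
    assert (Hn : 0 < INR n + 1) by (pose proof (pos_INR n); lra).
    destruct (Hnear (eps / (INR n + 1)) ltac:(apply Rdiv_lt_0_compat; lra)) as [r [[_ [_ Hr1]] Hr]].
    rewrite <- Hr1, <- sumR_minus. eapply Rle_lt_trans.
    + apply sumR_abs_bound with (e := eps / (INR n + 1)).
      intros j Hj. rewrite Rabs_minus_sym. left. exact (Hr j Hj).
    + replace (INR n * (eps / (INR n + 1))) with (eps - eps / (INR n + 1)) by (field; lra).
      assert (0 < eps / (INR n + 1)) by (apply Rdiv_lt_0_compat; lra). lra.
Qed.

Definition move_mass (t : nat -> nat -> R) (i l j : nat) (delta : R) : nat -> nat -> R :=
  fun i' j' => if Nat.eq_dec i' i then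
    (if Nat.eq_dec j' l then t i' j' - delta else if Nat.eq_dec j' j then t i' j' + delta else t i' j')
    else t i' j'.

Lemma move_mass_profile n k Rs t i l j delta : is_profile n k Rs t -> (i < k)%nat ->
  (l < n)%nat -> (j < n)%nat -> l <> j -> Rs i j = true -> 0 <= delta <= t i l ->
  is_profile n k Rs (move_mass t i l j delta).
Proof.
  intros Ht Hi Hl Hj Hlj HRj Hdelta i' Hi'. destruct (Ht i' Hi') as [H0 [HA H1]].
  unfold move_mass. destruct (Nat.eq_dec i' i) as [->|]; [|exact (Ht i' Hi')]. repeat split.
  - intros j' Hj'. destruct (Nat.eq_dec j' l) as [->|]; [lra|].
    destruct (Nat.eq_dec j' j); [specialize (H0 j' Hj')|]; auto; lra.
  - intros j' Hj' HR. destruct (Nat.eq_dec j' l) as [->|]; [rewrite (HA l Hl HR) in *; lra|].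
    destruct (Nat.eq_dec j' j) as [->|]; [congruence|auto].
  - rewrite <- H1, (sumR_ext n _ (fun j' => t i j' -
      ((if Nat.eq_dec j' l then delta else 0) - (if Nat.eq_dec j' j then delta else 0)))).
    + rewrite sumR_minus, sumR_minus, !sumR_indicator by assumption.
      transitivity (sumR n (t i)); [ring|reflexivity].
    + intros j' Hj'. destruct (Nat.eq_dec j' l) as [->|]; [destruct (Nat.eq_dec l j); [lia|ring]|].
      destruct (Nat.eq_dec j' j); ring.
Qed.

Section Limit.
Variables (n k : nat) (f : nat -> R -> R) (Rs : nat -> nat -> bool) (w : nat -> nat -> R -> R).
Hypothesis Hf_mono : forall j, (j < n)%nat -> forall x y, 0 <= x -> x <= y -> f j x <= f j y.
Hypothesis Hw_nonneg : forall i j, (i < k)%nat -> (j < n)%nat -> Rs i j = true ->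
  forall x, 0 <= x <= 1 -> 0 <= w i j x.
Hypothesis Hw_incr : forall i j, (i < k)%nat -> (j < n)%nat -> Rs i j = true ->
  forall x y, 0 <= x -> x < y -> y <= 1 -> w i j x < w i j y.
Hypothesis Hf_cont : forall j, (j < n)%nat -> cont_on nonneg_half (f j).
Hypothesis Hw_cont : forall i j, (i < k)%nat -> (j < n)%nat -> Rs i j = true ->
  cont_on unit_int (w i j).

Variables (u : nat -> nat -> nat -> R) (s : nat -> nat -> R).
Hypothesis Hu_grid : forall N, grid_profile n k Rs (S N) (u N).
Hypothesis Hu_min : forall N t, grid_profile n k Rs (S N) t ->
  ~ leximax_lt n (pcost k f Rs w (S N) t) (pcost k f Rs w (S N) (u N)).
Hypothesis Hs : cluster_point k n u s.

Local Notation h := (cost k f Rs w).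
Local Notation ph := (pcost k f Rs w).

Lemma limit_profile : is_profile n k Rs s.
Proof. exact (cluster_point_profile n k Rs u s (fun N => proj1 (Hu_grid N)) Hs). Qed.

Lemma fine_grid_near_limit eps c : 0 < eps -> 0 < c -> exists N,
  1 / INR (S N) <= eps /\ load_cap n k Rs w / INR (S N) < c /\
  forall i j, (i < k)%nat -> (j < n)%nat -> Rabs (u N i j - s i j) < eps.
Proof.
  intros Heps Hc. set (cap := load_cap n k Rs w).
  assert (Hcap : 0 <= cap) by exact (load_cap_nonneg n k Rs w Hw_nonneg).
  assert (Hc' : 0 < c / (cap + 1)) by (apply Rdiv_lt_0_compat; lra).
  destruct (inv_succ_small (Rmin eps (c / (cap + 1)))) as [N0 HN0]; [now apply Rmin_pos|].
  destruct (Hs eps Heps N0) as [N [HN Hclose]]. exists N.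
  specialize (HN0 N HN). pose proof (Rmin_l eps (c / (cap + 1))).
  pose proof (Rmin_r eps (c / (cap + 1))). assert (0 < INR (S N)) by (apply lt_0_INR; lia).
  split; [lra|split; [|exact Hclose]].
  replace (cap / INR (S N)) with (cap * (1 / INR (S N))) by (field; lra).
  apply Rle_lt_trans with (cap * (c / (cap + 1))); [apply Rmult_le_compat_l; lra|].
  replace (cap * (c / (cap + 1))) with (c - c / (cap + 1)) by (field; lra). lra.
Qed.

(* A deviation [s'] lowering [s i0 l0], in which every increased entry lands on a resource that
   becomes cheaper than before or cheaper than [l0] was, is mirrored on fine grids by a
   deviation from [u N] that is leximax-smaller for the perturbed costs. *)
Lemma limit_no_improvement s' i0 l0 : is_profile n k Rs s' -> (i0 < k)%nat -> (l0 < n)%nat ->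
  s' i0 l0 < s i0 l0 ->
  (forall i m, (i < k)%nat -> (m < n)%nat -> s i m < s' i m -> h s' m < h s m \/ h s' m < h s l0) ->
  False.
Proof.
  intros Hs' Hi0 Hl0 Hdec Himp.
  assert (Hsb := profile_in_box n k Rs s limit_profile).
  assert (Hs'b := profile_in_box n k Rs s' Hs').
  destruct (common_margin n (fun m => exists i, (i < k)%nat /\ s i m < s' i m)
    (fun m => h s' m) (fun m => h s m) (h s l0)) as [e [He Hmarg]].
  { intros m Hm [i [Hi Hlt]]. exact (Himp i m Hi Hm Hlt). }
  destruct (cost_continuous_uniform n k f Rs w Hw_nonneg Hf_cont Hw_cont s Hsb (e / 3))
    as [d1 [Hd1 Hc1]]; [lra|].
  destruct (cost_continuous_uniform n k f Rs w Hw_nonneg Hf_cont Hw_cont s' Hs'b (e / 3))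
    as [d2 [Hd2 Hc2]]; [lra|].
  destruct (small_radius n d1 d2 (s i0 l0 - s' i0 l0)) as [eps [Heps [Heps1 [Heps2 Heps3]]]];
    [lra..|].
  destruct (fine_grid_near_limit eps (e / 3)) as [N [HDeps [Hcap Hclose]]]; [lra..|].
  set (D := S N) in *. assert (HD : (0 < D)%nat) by (unfold D; lia).
  assert (HuNb := profile_in_box n k Rs (u N) (proj1 (Hu_grid N))).
  destruct (profile_rounding n k Rs D s s' (u N) eps HD HDeps limit_profile Hs' (Hu_grid N) Hclose)
    as [t [Ht [Htclose [Hincr Hdecr]]]].
  assert (Htb := profile_in_box n k Rs t (proj1 Ht)).
  assert (Hnear_s : forall m, (m < n)%nat -> h s m - e / 3 < ph D (u N) m).
  { intros m Hm. apply (pcost_near_cost n k f Rs w Hw_nonneg Hw_incr D s (u N) m); auto.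
    apply Hc1; auto. intros i j Hi Hj. apply Rlt_le_trans with eps; auto. }
  assert (Hnear_s' : forall m, (m < n)%nat -> ph D t m < h s' m + 2 * (e / 3)).
  { intros m Hm. apply (pcost_near_cost n k f Rs w Hw_nonneg Hw_incr D s' t m); auto.
    apply Hc2; auto. intros i j Hi Hj. apply Rle_lt_trans with (INR n * eps); auto. }
  apply (Hu_min N t Ht).
  apply (leximax_lt_of_cheaper_columns n k f Rs w Hf_mono Hw_nonneg Hw_incr D t (u N) l0 i0);
    auto.
  - apply (strategy_support n (Rs i0) (s i0)); [exact (limit_profile i0 Hi0)|exact Hl0|].
    destruct (Hs' i0 Hi0) as [Hs'0 _]. specialize (Hs'0 l0 Hl0). lra.
  - apply Hdecr; auto. lra.
  - intros m Hm [i [Hi Hlt]].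
    assert (Hnear_m := Hnear_s m Hm). assert (Hnear_l0 := Hnear_s l0 Hl0).
    assert (Ht_m := Hnear_s' m Hm).
    destruct (Hmarg m Hm (ex_intro _ i (conj Hi (Hincr i m Hi Hm Hlt)))); [left|right]; lra.
Qed.

Lemma limit_NE : is_NE n k f Rs w s.
Proof.
  split; [exact limit_profile|]. intros i l j Hi Hl Hj Hpos HRj.
  apply Rnot_lt_le. intros Hlt.
  assert (Hlj : l <> j) by (intros ->; lra).
  assert (Hsb := profile_in_box n k Rs s limit_profile).
  destruct (cost_continuous n k f Rs w Hw_nonneg Hf_cont Hw_cont s j Hsb Hj (h s l - h s j))
    as [d [Hd Hc]]; [lra|].
  set (delta := Rmin (s i l) (d / 2)).
  assert (Hdelta : 0 < delta <= s i l) by (split; [apply Rmin_pos; lra|apply Rmin_l]).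
  assert (Hdelta_d : delta < d) by (unfold delta; pose proof (Rmin_r (s i l) (d / 2)); lra).
  set (s' := move_mass s i l j delta).
  assert (Hs' : is_profile n k Rs s')
    by (apply move_mass_profile; auto; [exact limit_profile|lra]).
  apply (limit_no_improvement s' i l Hs' Hi Hl).
  - unfold s', move_mass. destruct (Nat.eq_dec i i); [|lia]. destruct (Nat.eq_dec l l); [lra|lia].
  - intros i' m Hi' Hm Hinc. right.
    assert (Hm_eq : m = j).
    { unfold s', move_mass in Hinc. destruct (Nat.eq_dec i' i); [|lra].
      destruct (Nat.eq_dec m l); [lra|]. destruct (Nat.eq_dec m j); [assumption|lra]. }
    subst m. enough (Rabs (h s' j - h s j) < h s l - h s j) by (apply Rabs_def2 in H; lra).
    apply Hc; [exact (profile_in_box n k Rs s' Hs')|].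
    intros i'' Hi''. unfold s', move_mass.
    destruct (Nat.eq_dec i'' i); [|rewrite Rminus_diag, Rabs_R0; exact Hd].
    destruct (Nat.eq_dec j l); [lia|]. destruct (Nat.eq_dec j j); [|lia].
    replace (s i'' j + delta - s i'' j) with delta by ring. rewrite Rabs_right; lra.
Qed.

Lemma limit_strong_NE : is_strong_NE n k f Rs w s.
Proof.
  split; [exact limit_NE|]. intros [s' [Hs' [[i [j [Hi [Hj Hne]]]] Hdev]]].
  assert (Hdec : exists l, (l < n)%nat /\ s' i l < s i l).
  { destruct (Rlt_dec (s' i j) (s i j)) as [Hlt|Hge]; [eauto|].
    apply (strategy_increase n (Rs i) (s' i) (s i) j (Hs' i Hi) (limit_profile i Hi) Hj). lra. }
  destruct Hdec as [l [Hl Hlt]].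
  apply (limit_no_improvement s' i l Hs' Hi Hl Hlt).
  intros i' m Hi' Hm Hinc. left.
  destruct (limit_profile i' Hi') as [Hs0 [_ Hs1]].
  destruct (sumR_pos_entry n (fun j' => s i' j') ltac:(lra)) as [m' [Hm' Hpos]].
  assert (HRm : Rs i' m = true)
    by (apply (strategy_support n (Rs i') (s' i') m (Hs' i' Hi') Hm); specialize (Hs0 m Hm); lra).
  assert (Hne_cost := proj2 limit_NE i' m' m Hi' Hm' Hm Hpos HRm).
  assert (Hdev_m := Hdev i' m m' Hi' Hm Hm' Hinc Hpos). lra.
Qed.

End Limit.

Module Compactness.
Import all_boot all_order all_algebra all_classical all_reals all_analysis.
Import Rstruct Rstruct_topology.
Import Order.TTheory GRing.Theory Num.Theory.
Import numFieldNormedType.Exports.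
Local Open Scope classical_set_scope.
Local Open Scope ring_scope.

Lemma unit_cube_cluster_point (m : nat) (u : nat -> nat -> R) :
  (forall N p, lt p m -> Rle 0 (u N p) /\ Rle (u N p) 1) ->
  exists x : nat -> R, forall eps : R, Rlt 0 eps -> forall N0, exists N, le N0 N /\
    forall p, lt p m -> Rlt (Rabs (u N p - x p)) eps.
Proof.
move=> Hb.
(* A spare coordinate makes [inord] available even when [m = 0]. *)
pose v N := \row_(p < m.+1) if (p < m)%N then u N p else 0.
pose cube := [set y : 'rV[R]_m.+1 | forall p, `[0, 1]%classic (y ord0 p)].
have cube_compact : compact cube.
  by apply: (@rV_compact R m.+1 (fun=> `[0, 1]%classic)) => p; apply: segment_compact.
have v_cube : (v @ \oo) cube.
  exists 0%N => // N _ p; rewrite /v mxE /= in_itv /=.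
  case: ifP => [/ssrnat.ltP /(Hb N) [H0 H1]|_]; last by rewrite lexx ler01.
  by apply/andP; split; apply/RleP.
have [x [_ x_cluster]] := cube_compact _ _ v_cube.
exists (fun p => x ord0 (inord p)) => eps /RltP eps0 N0.
have v_tail : (v @ \oo) (v @` [set N | (N0 <= N)%N]) by exists N0 => // N /= HN; exists N.
have [_ [[N HN <-] [_ Hball]]] := x_cluster _ _ v_tail (nbhsx_ballx x eps eps0).
exists N; split; first exact/ssrnat.leP.
move=> p /ssrnat.ltP Hp; have Hp1 : (p < m.+1)%N by rewrite ltnS ltnW.
have := Hball ord0 (Ordinal Hp1); rewrite /v mxE /ball /= Hp => Hclose.
have -> : (inord p : 'I_m.+1) = Ordinal Hp1 by apply/val_inj; rewrite /= inordK.
by apply/RltP; rewrite RabsE RminusE distrC.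
Qed.
End Compactness.

Lemma profile_sequence_cluster_point k n (u : nat -> nat -> nat -> R) :
  (forall N i j, (i < k)%nat -> (j < n)%nat -> 0 <= u N i j <= 1) ->
  exists s, cluster_point k n u s.
Proof.
  intros Hb.
  destruct (Compactness.unit_cube_cluster_point (k * n) (fun N p => u N (p / n)%nat (p mod n)%nat))
    as [x Hx].
  - intros N p Hp. apply Hb; [apply Nat.Div0.div_lt_upper_bound; lia|apply Nat.mod_upper_bound; lia].
  - exists (fun i j => x (i * n + j)%nat). intros eps Heps N0.
    destruct (Hx eps Heps N0) as [N [HN Hclose]]. exists N. split; [exact HN|].
    intros i j Hi Hj. specialize (Hclose (i * n + j)%nat ltac:(nia)).
    rewrite Nat.div_add_l, Nat.div_small, Nat.add_0_r in Hclose by lia.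
    rewrite Nat.add_comm, Nat.Div0.mod_add, Nat.mod_small in Hclose by lia.
    rewrite Nat.add_comm. exact Hclose.
Qed.

Theorem mainTheorem5 (n k : nat) (f : nat -> R -> R) (Rs : nat -> nat -> bool)
  (w : nat -> nat -> R -> R)
  (Hf_mono : forall j, (j < n)%nat -> forall x y, 0 <= x -> x <= y -> f j x <= f j y)
  (HR_ne : forall i, (i < k)%nat -> exists j, (j < n)%nat /\ Rs i j = true)
  (Hw_nonneg : forall i j, (i < k)%nat -> (j < n)%nat -> Rs i j = true ->
     forall x, 0 <= x <= 1 -> 0 <= w i j x)
  (Hw_incr : forall i j, (i < k)%nat -> (j < n)%nat -> Rs i j = true ->
     forall x y, 0 <= x -> x < y -> y <= 1 -> w i j x < w i j y)
  (Hf_cont : forall j, (j < n)%nat -> cont_on nonneg_half (f j))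
  (Hw_cont : forall i j, (i < k)%nat -> (j < n)%nat -> Rs i j = true ->
     cont_on unit_int (w i j)) :
  exists s, is_strong_NE n k f Rs w s.
Proof.
  assert (Hgrid : forall N, exists t, grid_profile n k Rs (S N) t /\ forall t', grid_profile n k Rs (S N) t' ->
      ~ leximax_lt n (pcost k f Rs w (S N) t') (pcost k f Rs w (S N) t))
    by (intros N; apply leximin_grid_profile; [lia|exact HR_ne]).
  set (u := fun N => proj1_sig (constructive_indefinite_description _ (Hgrid N))).
  assert (Hu : forall N, grid_profile n k Rs (S N) (u N) /\ forall t, grid_profile n k Rs (S N) t ->
      ~ leximax_lt n (pcost k f Rs w (S N) t) (pcost k f Rs w (S N) (u N)))
    by (intros N; exact (proj2_sig (constructive_indefinite_description _ (Hgrid N)))).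
  destruct (profile_sequence_cluster_point k n u) as [s Hs].
  { intros N i j Hi Hj. exact (profile_in_box n k Rs (u N) (proj1 (proj1 (Hu N))) i j Hi Hj). }
  exists s.
  exact (limit_strong_NE n k f Rs w Hf_mono Hw_nonneg Hw_incr Hf_cont Hw_cont u s
    (fun N => proj1 (Hu N)) (fun N => proj2 (Hu N)) Hs).
Qed.
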